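(* Let $n\ge1$ and $\mathbf t=[t_0,\dots,t_{n-1}]\in\Delta_{n-1}$. The edge weighting $c_{\mathbf t}:E_n\to\mathbb C$, $c_{\mathbf t}(ij) = (-1)^{\mathrm{par}_k(i)}\sqrt{t_k}$ for the edge $ij$ ($i\in U_n$) with $j = i\#k$, is admissible, and $U_n(c_{\mathbf t}) = U_n$.
   Context: For $n\ge1$, identify integers $0\le i<2^n$ with their $n$-digit binary representations $i=\sum_k i_k2^k$; $\mathrm{par}_k(i)=\sum_{\ell=0}^k i_\ell\bmod 2$ and $i\#k$ is $i$ with its $k$-th digit flipped. The hypercube $Q_n$ has vertex classes $U_n=\{i<2^n\mid\mathrm{par}_{n-1}(i)=0\}$, $V_n=\{j<2^n\mid \mathrm{par}_{n-1}(j)=1\}$ and edge set $E_n$ of pairs $ij$ ($i\in U_n$, $j\in V_n$, $j=i\#k$ for some $k<n$); $\mathcal N(x)$ is the set of neighbors of $x$. $\Delta_{n-1}=\{[t_0,\dots,t_{n-1}]\mid t_k\ge0,\sum t_k=1\}$. For $c:E_n\to\mathbb C$, $Q_n(c)=(U_n(c),V_n(c),E_n(c))$ is the subgraph formed by the edges with $c(ij)\ne0$ and their endpoints; $c$ is admissible if $\sum_{i\in\mathcal N(j_1)\cap\mathcal N(j_2)}c(ij_1)\overline{c(ij_2)}=\delta_{j_1j_2}$ for all $j_1,j_2\in V_n(c)$ and $\sum_{j\in\mathcal N(i_1)\cap\mathcal N(i_2)}c(i_1j)\overline{c(i_2j)}=\delta_{i_1i_2}$ for all $i_1,i_2\in U_n(c)$.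 *)

From HB Require Import structures.
From mathcomp Require Import all_boot all_order all_algebra.
From mathcomp Require Import complex.
From mathcomp Require Import reals.
Set Implicit Arguments. Unset Strict Implicit. Unset Printing Implicit Defensive.
Import Order.TTheory GRing.Theory Num.Theory.
Local Open Scope ring_scope.

Definition bit (i k : nat) : bool := odd (i %/ 2 ^ k)%N.

Definition par (k i : nat) : bool := odd (\sum_(l < k.+1) bit i l)%N.

(* i # k : i with its k-th digit flipped *)
Definition flip (i k : nat) : nat := if bit i k then (i - 2 ^ k)%N else (i + 2 ^ k)%N.

Definition inU (n : nat) (i : 'I_(2 ^ n)) : bool := ~~ par n.-1 i.
Definition inV (n : nat) (j : 'I_(2 ^ n)) : bool := par n.-1 j.

Definition edge (n : nat) (i j : 'I_(2 ^ n)) : bool :=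
  [&& inU i, inV j & [exists k : 'I_n, val j == flip i k]].

Definition nbr (n : nat) (x y : 'I_(2 ^ n)) : bool := edge x y || edge y x.

Section Weightings.
Variable R : realType.
Local Notation C := R[i].

(* An edge weighting c : E_n -> C is represented by a function of the two
   endpoints (i in U_n, j in V_n); only its values on edges are ever used. *)
Definition weighting (n : nat) := 'I_(2 ^ n) -> 'I_(2 ^ n) -> C.

Definition Uc (n : nat) (c : weighting n) : {set 'I_(2 ^ n)} :=
  [set i | [exists j, edge i j && (c i j != 0)]].
Definition Vc (n : nat) (c : weighting n) : {set 'I_(2 ^ n)} :=
  [set j | [exists i, edge i j && (c i j != 0)]].

Definition admissible (n : nat) (c : weighting n) : Prop :=
  (forall j1 j2, j1 \in Vc c -> j2 \in Vc c ->
     \sum_(i | nbr i j1 && nbr i j2) c i j1 * (c i j2)^* = (j1 == j2)%:R) /\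
  (forall i1 i2, i1 \in Uc c -> i2 \in Uc c ->
     \sum_(j | nbr i1 j && nbr i2 j) c i1 j * (c i2 j)^* = (i1 == i2)%:R).

Definition in_simplex (n : nat) (t : 'I_n -> R) : Prop :=
  (forall k, 0 <= t k) /\ \sum_(k < n) t k = 1.

Definition c_t (n : nat) (t : 'I_n -> R) : weighting n :=
  fun i j =>
    if [pick k : 'I_n | val j == flip i k] is Some k
    then (-1) ^+ par k i * (Num.sqrt (t k))%:C%C
    else 0.
End Weightings.

From HB Require Import structures.
From mathcomp Require Import all_boot all_order all_algebra.
From mathcomp Require Import complex.
From mathcomp Require Import reals.
From mathcomp Require Import zify.
Import Order.TTheory GRing.Theory Num.Theory.

Set Implicit Arguments.
Unset Strict Implicit.
Unset Printing Implicit Defensive.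

(* Since par_l(x#m) = par_l(x) + [m <= l], the weight changes sign when the
   endpoints are swapped, so both admissibility conditions say that the rows
   (c(x, .))_x are orthonormal.  A row has squared norm sum_k t_k = 1.  Two
   distinct vertices have a common neighbour only if they differ in exactly
   two digits a <> b; the common neighbours are then x#a and x#b, and the two
   corresponding products have signs differing by [a <= b] + [b <= a] = 1,
   so they cancel. *)

Lemma bit0n i : bit i 0 = odd i.
Proof. by rewrite /bit expn0 divn1. Qed.

Lemma bitSn i l : bit i l.+1 = bit i./2 l.
Proof. by rewrite /bit expnS divnMA -divn2 divnAC. Qed.

Lemma bit_add_double (b : bool) m l :
  bit (b + m.*2) l = if l is l'.+1 then bit m l' else b.
Proof.
case: l => [|l]; last by rewrite bitSn half_bit_double.
by rewrite bit0n oddD odd_double addbF oddb.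
Qed.

Lemma flip0 i : flip i 0 = ~~ odd i + (i./2).*2.
Proof.
rewrite /flip bit0n expn0; move: (odd_double_half i).
by case: (odd i) => /=; lia.
Qed.

Lemma flipS i k : flip i k.+1 = odd i + (flip i./2 k).*2.
Proof.
rewrite /flip bitSn expnS; move: (odd_double_half i); set m := i./2.
case bit_mk: (bit m k); last by case: (odd i) => /=; lia.
have : 2 ^ k <= m by rewrite leqNgt; apply: contraTN bit_mk; rewrite /bit => /divn_small->.
by case: (odd i) => /=; lia.
Qed.

Lemma bit_flip i k l : bit (flip i k) l = bit i l (+) (l == k).
Proof.
elim: k i l => [|k IH] i [|l];
  by rewrite ?flip0 ?flipS bit_add_double ?bit0n ?bitSn ?IH ?addbT ?addbF.
Qed.

Lemma flip_ltn n i k : i < 2 ^ n -> k < n -> flip i k < 2 ^ n.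
Proof.
elim: n i k => [|n IH] i [|k] //; rewrite expnS mul2n -ltn_half_double => lt_i lt_k.
  by rewrite flip0; case: (odd i) => /=; lia.
by rewrite flipS; move: (IH _ _ lt_i lt_k); case: (odd i) => /=; lia.
Qed.

Lemma bit_inj x y : (forall l, bit x l = bit y l) -> x = y.
Proof.
have [n] : exists n, (x < 2 ^ n) && (y < 2 ^ n).
  exists (x + y); apply/andP; split; apply: leq_ltn_trans (ltn_expl _ (ltnSn 1)); lia.
elim: n x y => [|n IH] x y; first by rewrite !expn0 !ltnS !leqn0 => /andP[/eqP-> /eqP->].
rewrite expnS mul2n -!ltn_half_double => lt_xy eq_bits.
rewrite -(odd_double_half x) -(odd_double_half y) -!bit0n eq_bits (IH x./2 y./2) //.
by move=> l; rewrite -!bitSn.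
Qed.

Lemma flipK k : involutive (flip^~ k).
Proof. by move=> i; apply: bit_inj => l; rewrite !bit_flip -addbA addbb addbF. Qed.

Lemma flipC i a b : flip (flip i a) b = flip (flip i b) a.
Proof. by apply: bit_inj => l; rewrite !bit_flip -!addbA (addbC (l == b)). Qed.

Lemma flip_inj i : injective (flip i).
Proof.
move=> a b /(congr1 (bit^~ a)); rewrite !bit_flip eqxx.
by case: (bit i a); case: eqP.
Qed.

Lemma par0 i : par 0 i = bit i 0.
Proof. by rewrite /par big_ord_recr big_ord0 /= oddb. Qed.

Lemma parS k i : par k.+1 i = par k i (+) bit i k.+1.
Proof. by rewrite /par big_ord_recr /= oddD oddb. Qed.

Lemma leqS_addb m k : (m <= k.+1) = (m <= k) (+) (m == k.+1).
Proof.
case: ltngtP => [lt_mk|lt_km|->]; last by rewrite ltnn.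
  by rewrite addbF -ltnS lt_mk.
by rewrite addbF leqNgt (ltnW lt_km).
Qed.

Lemma par_flip k i m : par k (flip i m) = par k i (+) (m <= k).
Proof.
elim: k => [|k IH]; first by rewrite !par0 bit_flip leqn0 eq_sym.
by rewrite !parS IH bit_flip leqS_addb (eq_sym m) !addbA (addbAC _ (m <= k)).
Qed.

Lemma leq_addb_geq (a b : nat) : (a <= b) (+) (b <= a) = (a != b).
Proof. by case: ltngtP. Qed.

Section Hypercube.
Variable n : nat.
Implicit Types (x y : 'I_(2 ^ n)) (k : 'I_n).
Local Notation N := (2 ^ n).

Definition vflip (x : 'I_N) (k : 'I_n) : 'I_N :=
  Ordinal (flip_ltn (ltn_ord x) (ltn_ord k)).

Lemma vflipK k : involutive (vflip^~ k).
Proof. by move=> x; apply: val_inj; rewrite /= flipK. Qed.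

Lemma vflipC x a b : vflip (vflip x a) b = vflip (vflip x b) a.
Proof. by apply: val_inj; rewrite /= flipC. Qed.

Lemma vflip_inj x : injective (vflip x).
Proof. by move=> a b /(congr1 val) /flip_inj /val_inj. Qed.

Lemma par_vflip (l : nat) x k : par l (vflip x k) = par l x (+) (k <= l).
Proof. exact: par_flip. Qed.

Lemma inU_vflip x k : inU (vflip x k) = ~~ inU x.
Proof.
have le_k : k <= n.-1 by rewrite -ltnS prednK ?ltn_ord // (leq_ltn_trans _ (ltn_ord k)).
by rewrite /inU par_vflip le_k addbT.
Qed.

Lemma inVE (x : 'I_N) : inV x = ~~ inU x.
Proof. by rewrite /inU negbK. Qed.

Lemma edge_vflip x k : inU x -> edge x (vflip x k).
Proof.
move=> Ux; rewrite /edge Ux inVE inU_vflip Ux.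
by apply/existsP; exists k.
Qed.

Lemma nbrE x y : nbr x y = [exists k, y == vflip x k].
Proof.
apply/idP/existsP => [|[k /eqP->]].
  case/orP=> /and3P[_ _ /existsP[k /eqP xy]]; exists k; apply/eqP/val_inj => //.
  by rewrite /= xy flipK.
case Ux: (inU x); first by rewrite /nbr edge_vflip.
rewrite /nbr -[X in _ || edge _ X](vflipK k x) (edge_vflip (x := vflip x k)) ?orbT //.
by rewrite inU_vflip Ux.
Qed.

Lemma nbrC x y : nbr x y = nbr y x.
Proof. by rewrite /nbr orbC. Qed.

Lemma sum_nbr (V : nmodType) x (P : pred 'I_N) (F : 'I_N -> V) :
  (\sum_(y | nbr x y && P y) F y = \sum_(k | P (vflip x k)) F (vflip x k))%R.
Proof.
rewrite (eq_bigl (fun y => (y \in vflip x @: setT) && P y)) => [|y].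
  rewrite big_imset_cond; last exact: in2W (@vflip_inj x).
  by apply: eq_bigl => k; rewrite inE.
congr (_ && _); rewrite nbrE.
by apply/existsP/imsetP => [[k /eqP->]|[k _ ->]]; exists k.
Qed.

Lemma vflip2_mem x a b a' b' : a' != b' ->
  vflip (vflip x a) b = vflip (vflip x a') b' -> a \in [:: a'; b'].
Proof.
move=> neq_ab' same_ends.
have diff l : (l == a) (+) (l == b) = (l == a') (+) (l == b').
  move: (congr1 (fun y => bit (val y) l) same_ends).
  by rewrite /= !bit_flip -!addbA => /addbI.
have [eq_ab|neq_ab] := eqVneq a b.
  by move: (diff a'); rewrite eq_ab addbb eqxx (negbTE neq_ab').
move: (diff a); rewrite eqxx (negbTE neq_ab) !inE.
by case: (a == a'); case: (a == b').
Qed.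

Lemma nbr_vflip2 x a b k : a != b ->
  nbr (vflip (vflip x a) b) (vflip x k) = (k \in [:: a; b]).
Proof.
move=> neq_ab; rewrite nbrC nbrE.
apply/existsP/idP => [[b' /eqP /esym /(vflip2_mem neq_ab)] //|].
rewrite !inE => /orP[] /eqP->; first by exists b.
by exists a; rewrite vflipC.
Qed.

End Hypercube.

Local Open Scope ring_scope.

Lemma sign_mul_conj (R : rcfType) (p q : bool) (u v : R) :
  (-1) ^+ p * u%:C%C * ((-1) ^+ q * v%:C%C)^* = (-1) ^+ (p (+) q) * (u * v)%:C%C.
Proof.
have conj_real (w : R) : (w%:C%C)^* = w%:C%C := conjc_real w.
by rewrite rmorphM rmorph_sign /= conj_real mulr_signM rmorphM.
Qed.

Lemma signr_addb_cancel (R : pzRingType) (p q : bool) (z : R) :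
  p (+) q -> (-1) ^+ p * z + (-1) ^+ q * z = 0.
Proof. by case: p; case: q => // _; rewrite mulN1r mul1r ?addNr ?addrN. Qed.

Section EdgeWeights.
Variables (R : realType) (n : nat) (t : 'I_n -> R).
Implicit Types (x y : 'I_(2 ^ n)) (k : 'I_n).
Local Notation c := (c_t t).

Lemma c_t_vflip x k : c x (vflip x k) = (-1) ^+ par k x * (Num.sqrt (t k))%:C%C.
Proof.
rewrite /c_t; case: pickP => [k' /eqP /flip_inj /val_inj <- // | no_dir].
by move: (no_dir k); rewrite eqxx.
Qed.

Lemma c_t_antisym x y : nbr x y -> c y x = - c x y.
Proof.
rewrite nbrE => /existsP[k /eqP->].
by rewrite -[X in c _ X](vflipK k x) !c_t_vflip par_vflip leqnn addbT signrN mulNr.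
Qed.

Lemma c_t_cancel x1 x2 a b : a != b -> x2 = vflip (vflip x1 a) b ->
  c x1 (vflip x1 a) * (c x2 (vflip x1 a))^* +
  c x1 (vflip x1 b) * (c x2 (vflip x1 b))^* = 0.
Proof.
move=> neq_ab x2_def.
have x1a_x2b : vflip x1 a = vflip x2 b by rewrite x2_def vflipK.
have x1b_x2a : vflip x1 b = vflip x2 a by rewrite x2_def vflipC vflipK.
rewrite 2!c_t_vflip x1a_x2b x1b_x2a !c_t_vflip !sign_mul_conj [Num.sqrt (t b) * _]mulrC.
apply: signr_addb_cancel; rewrite x2_def !par_vflip !leqnn.
move: (leq_addb_geq a b); rewrite neq_ab.
by case: (par a x1); case: (par b x1); case: (a <= b)%N; case: (b <= a)%N.
Qed.

Hypothesis t_simplex : in_simplex t.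

Lemma c_t_norm x : \sum_(y | nbr x y && nbr x y) c x y * (c x y)^* = 1.
Proof.
have [t_ge0 sum_t] := t_simplex.
rewrite sum_nbr (eq_bigl xpredT) => [|k]; last by rewrite nbrE; apply/existsP; exists k.
under eq_bigr do rewrite c_t_vflip sign_mul_conj addbb mul1r -expr2 sqr_sqrtr //.
by rewrite -rmorph_sum sum_t.
Qed.

Lemma c_t_orthonormal x1 x2 :
  \sum_(y | nbr x1 y && nbr x2 y) c x1 y * (c x2 y)^* = (x1 == x2)%:R.
Proof.
have [<-|neq_x] := eqVneq x1 x2; first exact: c_t_norm.
rewrite sum_nbr; case: (pickP (fun k => nbr x2 (vflip x1 k))) => [a|none]; last first.
  by rewrite big_pred0.
rewrite nbrC nbrE => /existsP[b /eqP x2_def].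
have neq_ab : a != b by apply: contraNneq neq_x => eq_ab; rewrite x2_def eq_ab vflipK.
rewrite (eq_bigl (mem [:: a; b])) => [|k]; last by rewrite x2_def nbr_vflip2.
rewrite -big_uniq /= ?inE ?neq_ab // big_cons big_seq1.
exact: c_t_cancel.
Qed.

Lemma Uc_c_t : Uc c = [set x | inU x].
Proof.
have [t_ge0 sum_t] := t_simplex.
apply/setP => x; rewrite !inE; apply/existsP/idP => [[y /andP[/and3P[]]] //|Ux].
have [k tk_neq0] : exists k, t k != 0.
  case: (pickP (fun k => t k != 0)) => [k|all0]; first by exists k.
  by move: sum_t; rewrite big1 => [/esym/eqP|k _]; [rewrite oner_eq0 | apply/eqP/negbFE/all0].
exists (vflip x k); rewrite edge_vflip //= c_t_vflip mulf_neq0 ?signr_eq0 //.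
by rewrite fmorph_eq0 sqrtr_eq0 -ltNge lt0r tk_neq0 t_ge0.
Qed.

End EdgeWeights.

Theorem proposition4p8 (R : realType) (n : nat) (hn : (1 <= n)%N)
    (t : 'I_n -> R) (ht : in_simplex t) :
  admissible (c_t t) /\ Uc (c_t t) = [set i | inU i].
Proof.
split; last exact: Uc_c_t.
split=> [j1 j2 _ _ | i1 i2 _ _]; last exact: c_t_orthonormal.
rewrite -(c_t_orthonormal ht); apply: eq_big => i; first by rewrite !(nbrC i).
by case/andP=> nbr_1 nbr_2; rewrite (c_t_antisym t nbr_1) (c_t_antisym t nbr_2) rmorphN mulrNN.
Qed.
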